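(* Let $X,Y$ be compact metric spaces, $\pi_0$ a Borel probability on $X\times Y$ which is positive on nonempty open sets, with $x$-marginal $P_0$, and let $\nu$ be a Borel probability on $X$ with $\operatorname{supp}(\nu)=X$. Suppose there is a continuous $\phi:X\times Y\to\mathbb{R}$ such that $e^{\phi}$ is a $\nu$-Jacobian of $\pi_0$. Then there is a continuous $\psi_0:X\times Y\to\mathbb{R}$ such that $e^{\psi_0}$ is a $P_0$-Jacobian of $\pi_0$, and for every Borel probability $\pi$ on $X\times Y$, \[IG(\pi,\pi_0):=-\int\psi_0\,d\pi-H^{P_0}(\pi)\;=\;-\int\phi\,d\pi-H^{\nu}(\pi).\]
   Context: For a probability $\rho$ on $X$, a measurable $J:X\times Y\to[0,\infty)$ is a $\rho$-Jacobian of a probability $\pi$ on $X\times Y$ with $y$-marginal $Q$ if $\int J(x,y)\,d\rho(x)=1$ for every $y$ and $\int\!\int g(x,y)J(x,y)\,d\rho(x)\,dQ(y)=\int g\,d\pi$ for every bounded measurable $g$. $\mathcal{F}(\pi)$ is the set of measurable functions whose $\pi$-integral is well defined (not $+\infty-\infty$), and $H^{\rho}(\pi)=-\sup\{\int c\,d\pi:\ c\in\mathcal{F}(\pi),\ \int e^{c(x,y)}\,d\rho(x)=1\ \forall y\in Y\}$. *)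

From HB Require Import structures.
From mathcomp Require Import all_boot all_order all_algebra.
From mathcomp Require Import all_classical all_reals all_analysis.
Set Implicit Arguments.
Unset Strict Implicit.
Unset Printing Implicit Defensive.
Import Order.TTheory GRing.Theory Num.Theory.
Import numFieldNormedType.Exports.
Local Open Scope classical_set_scope.
Local Open Scope ring_scope.

(* A pointed copy of a (nonempty) topological space, needed because
   measurable types in MathComp-Analysis must be pointed. *)
Definition ptd (T : Type) (x0 : T) : Type := T.
HB.instance Definition _ (T : topologicalType) (x0 : T) :=
  Topological.on (ptd x0).
HB.instance Definition _ (T : topologicalType) (x0 : T) :=
  isPointed.Build (ptd x0) x0.

Definition borel (T : topologicalType) (x0 : T) :=
  g_sigma_algebraType (@open (ptd x0)).

Definition msupport (T : topologicalType) (R : realType)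
  (mu : set T -> \bar R) : set T :=
  [set x | forall U : set T, open U -> U x -> (0 < mu U)%E].

Section jacobian.
Context {R : realType} {d1 d2 : measure_display}
  {X : measurableType d1} {Y : measurableType d2}.

Definition xmarg (pi : set (X * Y) -> \bar R) : set X -> \bar R :=
  pushforward pi fst.
Definition ymarg (pi : set (X * Y) -> \bar R) : set Y -> \bar R :=
  pushforward pi snd.

Definition is_jacobian (rho : set X -> \bar R) (pi : set (X * Y) -> \bar R)
  (J : X * Y -> R) : Prop :=
  [/\ measurable_fun setT J,
      (forall z, 0 <= J z),
      (forall y : Y, (\int[rho]_x (J (x, y))%:E = 1)%E) &
      (forall g : X * Y -> R, measurable_fun setT g ->
         [bounded g z | z in [set: X * Y]] ->
         (\int[ymarg pi]_y \int[rho]_x (g (x, y) * J (x, y))%:E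
            = \int[pi]_z (g z)%:E)%E)].

Definition wdef_int (pi : set (X * Y) -> \bar R) (c : X * Y -> R) : Prop :=
  ~ ((\int[pi]_z funepos (fun z => (c z)%:E) z = +oo)%E /\
     (\int[pi]_z funeneg (fun z => (c z)%:E) z = +oo)%E).

Definition Fset (pi : set (X * Y) -> \bar R) : set (X * Y -> R) :=
  [set c | measurable_fun setT c /\ wdef_int pi c].

Definition Hrel (rho : set X -> \bar R) (pi : set (X * Y) -> \bar R) : \bar R :=
  (- ereal_sup [set (\int[pi]_z (c z)%:E)%E | c in
      [set c | Fset pi c /\
               forall y : Y, (\int[rho]_x (expR (c (x, y)))%:E = 1)%E]])%E.

End jacobian.

(* Fubini applied to the nu-Jacobian e^phi of pi0 shows that the x-marginal
   P0 has density h(x) = \int e^phi(x,y) dQ(y) with respect to nu, Q being the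
   y-marginal of pi0.  By compactness h is continuous and bounded away from 0,
   so psi0 := phi - ln h(x) is continuous, and e^psi0 is a P0-Jacobian since
   \int f dP0 = \int f h dnu.  The same change of measure shows that c is
   nu-normalized iff c - ln h(x) is P0-normalized; as ln h is bounded this
   shift preserves F(pi) and moves integrals by \int ln h dpi, so
   H^nu(pi) = H^P0(pi) - \int ln h dpi, which is the claimed identity. *)

From HB Require Import structures.
From mathcomp Require Import all_boot all_order all_algebra.
From mathcomp Require Import all_classical all_reals all_analysis.
From mathcomp Require Import measurable_realfun ring.
Import Order.TTheory GRing.Theory Num.Theory.
Import numFieldNormedType.Exports.
Local Open Scope classical_set_scope.
Local Open Scope ring_scope.
Set Implicit Arguments.
Unset Strict Implicit.
Unset Printing Implicit Defensive.

Section marginals.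
Context {R : realType} {d1 d2 : measure_display}
  {X : measurableType d1} {Y : measurableType d2}.
Variable pi : probability (X * Y)%type R.

HB.instance Definition _ :=
  isMeasurableFun.Build _ _ _ _ (@fst X Y) measurable_fst.
HB.instance Definition _ :=
  isMeasurableFun.Build _ _ _ _ (@snd X Y) measurable_snd.
HB.instance Definition _ := Probability.copy (xmarg pi) (distribution pi fst).
HB.instance Definition _ := Probability.copy (ymarg pi) (distribution pi snd).
End marginals.

Lemma Rintegral_probability_cst d (T : measurableType d) (R : realType)
    (P : probability T R) (r : R) :
  \int[P]_(_ in [set: T]) r = r.
Proof.
have P1 : (P : {measure set T -> \bar R}) setT = 1%E by exact: probability_setT.
by rewrite Rintegral_cst// P1 mulr1.
Qed.

Section density.
Context d (T : measurableType d) (R : realType).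
Variables (mu : {sigma_finite_measure set T -> \bar R})
  (nu : {finite_measure set T -> \bar R}) (g : T -> R).
Hypotheses (g_ge0 : forall x, 0 <= g x) (mg : measurable_fun [set: T] g).
Hypothesis nuE :
  forall A, measurable A -> nu A = (\int[mu]_(x in A) (g x)%:E)%E.
Local Open Scope ereal_scope.

Let nu_mu : nu `<< mu.
Proof.
apply/null_content_dominatesP => A mA muA0; rewrite nuE//.
apply: null_set_integral => //.
by apply: measurable_funTS; exact/measurable_EFinP.
Qed.

Let RN_density :
  ae_eq mu [set: T] (Radon_Nikodym_SigmaFinite.f nu mu) (EFin \o g).
Proof.
apply: integral_ae_eq => //.
- exact: Radon_Nikodym_SigmaFinite.f_integrable.
- exact/measurable_EFinP.
- by move=> A _ mA; rewrite -Radon_Nikodym_SigmaFinite.f_integral// nuE.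
Qed.

Lemma ge0_integral_density (f : T -> \bar R) : (forall x, 0 <= f x) ->
  measurable_fun [set: T] f ->
  \int[nu]_x f x = \int[mu]_x (f x * (g x)%:E).
Proof.
move=> f0 mf; rewrite -(Radon_Nikodym_SigmaFinite.change_of_variables nu_mu)//.
apply: ae_eq_integral => //.
- apply: emeasurable_funM => //.
  exact/measurable_int/Radon_Nikodym_SigmaFinite.f_integrable.
- by apply: emeasurable_funM => //; exact/measurable_EFinP.
- exact: ae_eqe_mul2l.
Qed.

Lemma integral_density (f : T -> \bar R) : measurable_fun [set: T] f ->
  \int[nu]_x f x = \int[mu]_x (f x * (g x)%:E).
Proof.
move=> mf; have g0 x : 0 <= (g x)%:E by rewrite lee_fin.
rewrite integralE [RHS]integralE.
rewrite !ge0_integral_density//; [|exact: measurable_funeneg|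
                                  exact: measurable_funepos].
congr (_ - _); apply: eq_integral => x _.
- by rewrite !funeposE maxe_pMl ?mul0e.
- by rewrite !funenegE -mulNe maxe_pMl ?mul0e.
Qed.

End density.

Section bounded_perturbation.
Context d (T : measurableType d) (R : realType).
Variable mu : {finite_measure set T -> \bar R}.
Local Open Scope ereal_scope.

Let muT_lty : mu [set: T] < +oo.
Proof. by rewrite ltey_eq fin_num_measure. Qed.

Lemma bounded_integrable (f : T -> R) (K : R) : measurable_fun [set: T] f ->
  (forall z, `|f z| <= K)%R -> mu.-integrable [set: T] (EFin \o f).
Proof.
move=> mf fK; apply: measurable_bounded_integrable => //.
exists K; split; first exact: num_real.
by move=> M KM z _; apply: le_trans (fK z) (ltW KM).
Qed.

Lemma integral_funepos_lty_le (f g : T -> R) (K : R) :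
  measurable_fun [set: T] f -> measurable_fun [set: T] g ->
  (forall z, f z <= g z + K)%R ->
  \int[mu]_z (fun z => (g z)%:E)^\+ z < +oo ->
  \int[mu]_z (fun z => (f z)%:E)^\+ z < +oo.
Proof.
move=> mf mg fgK gfin; pose K' := Num.max K 0%R.
have K'0 : (0 <= K')%R by rewrite le_max lexx orbT.
apply: (@le_lt_trans _ _
  (\int[mu]_z ((fun z => (g z)%:E)^\+ z + K'%:E))); last first.
  rewrite ge0_integralD//; last exact/measurable_funepos/measurable_EFinP.
  by rewrite integral_cst// lte_add_pinfty// lte_mul_pinfty.
apply: ge0_le_integral => //.
- exact/measurable_funepos/measurable_EFinP.
- apply: emeasurable_funD => //; exact/measurable_funepos/measurable_EFinP.
- move=> z _; rewrite !funeposE -!EFin_max -EFinD lee_fin ge_max.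
  rewrite addr_ge0 ?le_max ?lexx ?orbT// andbT (le_trans (fgK z))//.
  by rewrite lerD// le_max lexx.
Qed.

Lemma integral_funeneg_lty_le (f g : T -> R) (K : R) :
  measurable_fun [set: T] f -> measurable_fun [set: T] g ->
  (forall z, g z <= f z + K)%R ->
  \int[mu]_z (fun z => (g z)%:E)^\- z < +oo ->
  \int[mu]_z (fun z => (f z)%:E)^\- z < +oo.
Proof.
move=> mf mg gfK.
have negE (h : T -> R) :
    (fun z => (h z)%:E)^\- = (fun z => (- h z)%:E)^\+.
  by apply/funext => z; rewrite funenegE funeposE EFinN.
rewrite !negE; apply: integral_funepos_lty_le; [exact: measurableT_comp..|].
by move=> z; rewrite lerNl opprD opprK lerBlDr.
Qed.
End bounded_perturbation.

Section bounded_shift.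
Context (R : realType) d1 d2 (X : measurableType d1) (Y : measurableType d2).
Variable pi : {finite_measure set (X * Y)%type -> \bar R}.
Local Open Scope ereal_scope.

Lemma wdef_intP (f : X * Y -> R) : wdef_int pi f <->
  \int[pi]_z (fun z => (f z)%:E)^\+ z < +oo \/
  \int[pi]_z (fun z => (f z)%:E)^\- z < +oo.
Proof.
split=> [fi|[fp|fn] [p n]].
- apply/orP; rewrite !ltey -negb_and; apply/negP => /andP[/eqP p /eqP n].
  exact: fi.
- by move: fp; rewrite p ltxx.
- by move: fn; rewrite n ltxx.
Qed.

Variables (c L : X * Y -> R) (K : R).
Hypotheses (mc : measurable_fun [set: (X * Y)%type] c)
  (mL : measurable_fun [set: (X * Y)%type] L) (LK : forall z, (`|L z| <= K)%R).

Let mcL : measurable_fun [set: (X * Y)%type] (fun z => c z + L z)%R.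
Proof. exact: measurable_funD. Qed.

Let shift_le z : (c z + L z <= c z + K)%R.
Proof. by rewrite lerD2l (le_trans (ler_norm _)). Qed.

Let le_shift z : (c z <= (c z + L z) + K)%R.
Proof.
have := LK z; rewrite ler_norml => /andP[NKL _].
by rewrite -addrA lerDl -lerBlDr sub0r.
Qed.

Let pos_lty :
  (\int[pi]_z (fun z => (c z)%:E)^\+ z < +oo) =
  (\int[pi]_z (fun z => (c z + L z)%:E)^\+ z < +oo).
Proof. by apply/idP/idP; exact: integral_funepos_lty_le. Qed.

Let neg_lty :
  (\int[pi]_z (fun z => (c z)%:E)^\- z < +oo) =
  (\int[pi]_z (fun z => (c z + L z)%:E)^\- z < +oo).
Proof. by apply/idP/idP; exact: integral_funeneg_lty_le. Qed.

Lemma wdef_int_shift : wdef_int pi c -> wdef_int pi (fun z => c z + L z)%R.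
Proof. by rewrite !wdef_intP pos_lty neg_lty. Qed.

Let integral_Ny (f : X * Y -> R) :
  \int[pi]_z (fun z => (f z)%:E)^\- z = +oo -> \int[pi]_z (f z)%:E = -oo.
Proof. by move=> fn; rewrite [LHS]integralE fn addeNy. Qed.

Let integral_y (f : X * Y -> R) :
  \int[pi]_z (fun z => (f z)%:E)^\+ z = +oo ->
  \int[pi]_z (fun z => (f z)%:E)^\- z < +oo -> \int[pi]_z (f z)%:E = +oo.
Proof.
move=> fp fn; rewrite [LHS]integralE fp addye// eqe_oppLR/=.
by rewrite -ltey.
Qed.

Lemma integralD_shift : wdef_int pi c ->
  \int[pi]_z (c z + L z)%:E = \int[pi]_z (c z)%:E + \int[pi]_z (L z)%:E.
Proof.
move=> wc; have iL := bounded_integrable pi mL LK.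
have fL := integrable_fin_num measurableT iL.
have [cp|cp] := eqVneq (\int[pi]_z (fun z => (c z)%:E)^\+ z) +oo;
  have [cn|cn] := eqVneq (\int[pi]_z (fun z => (c z)%:E)^\- z) +oo;
  rewrite -?ltey in cp cn.
- by case: wc.
- have cLp : \int[pi]_z (fun z => (c z + L z)%:E)^\+ z = +oo.
    by apply/eqP; rewrite -leye_eq leNgt -pos_lty cp ltxx.
  have cLn : \int[pi]_z (fun z => (c z + L z)%:E)^\- z < +oo.
    by rewrite -neg_lty.
  rewrite (integral_y cp cn) (integral_y cLp cLn) addye//.
  by move: fL; rewrite fin_numE => /andP[].
- have cLn : \int[pi]_z (fun z => (c z + L z)%:E)^\- z = +oo.
    by apply/eqP; rewrite -leye_eq leNgt -neg_lty cn ltxx.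
  by rewrite (integral_Ny cn) (integral_Ny cLn).
- have ic : pi.-integrable [set: (X * Y)%type] (EFin \o c).
    apply/integrableP; split; first exact/measurable_EFinP.
    rewrite (eq_integral (((EFin \o c)^\+ \+ (EFin \o c)^\-)));
      last by move=> z _; rewrite -[LHS]/((abse \o (EFin \o c)) z) fune_abse.
    rewrite ge0_integralD//; [exact: lte_add_pinfty|
      exact/measurable_funepos/measurable_EFinP|
      exact/measurable_funeneg/measurable_EFinP].
  by under eq_integral do rewrite EFinD; rewrite integralD.
Qed.
End bounded_shift.

Lemma ereal_sup_addEFin (R : realType) (S : set (\bar R)) (k : R) :
  ereal_sup [set (x + k%:E)%E | x in S] = (ereal_sup S + k%:E)%E.
Proof.
have sup_le (T : set (\bar R)) (r : R) :
    (ereal_sup [set (x + r%:E)%E | x in T] <= ereal_sup T + r%:E)%E.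
  by apply: ge_ereal_sup => _ [x Tx <-]; rewrite leeD2r// ereal_sup_ubound.
apply/eqP; rewrite eq_le sup_le/=.
set S' := [set (x + k%:E)%E | x in S].
have -> : S = [set (y + (- k)%:E)%E | y in S'].
  apply/seteqP; split => [x Sx|_ [_ [x Sx <-] <-]].
    by exists (x + k%:E)%E; [exists x|rewrite EFinN addeK].
  by rewrite EFinN addeK.
apply: le_trans (leeD2r _ (sup_le S' (- k))) _.
by rewrite EFinN subeK.
Qed.

Lemma compact_continuous_bounded (R : realType) (T : topologicalType)
    (f : T -> R) :
  compact [set: T] -> continuous f -> exists M, forall z, `|f z| <= M.
Proof.
move=> cT cf; have := continuous_compact (continuous_subspaceT cf) cT.
move=> /compact_bounded [M [_ HM]]; exists (M + 1) => z.
by apply: (HM (M + 1)); [rewrite ltrDl|exists z].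
Qed.

Lemma near_section_dist_lt (R : realType) (X Y : topologicalType)
    (E : X * Y -> R) (x : X) (e : R) :
  continuous E -> compact [set: Y] -> 0 < e ->
  \forall x' \near x, forall y, `|E (x', y) - E (x, y)| < e.
Proof.
move=> cE cY e0.
have near_pair y : [set: Y] y -> \forall y' \near y & x' \near x,
    `|E (x', y') - E (x, y')| < e.
  move=> _; have e20 : 0 < e / 2 by rewrite divr_gt0.
  have [[A B] /= [nA nB] AB] := cvgr_dist_lt _ _ (cE (x, y)) _ e20.
  exists (B, A) => //= -[y' x'] /= [By' Ax'].
  rewrite (splitr e); apply: le_lt_trans (ler_distD (E (x, y)) _ _) _.
  apply: ltrD; first by rewrite distrC; exact: (AB (x', y')).
  by apply: (AB (x, y')); split => //; exact: nbhs_singleton.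
have := (compact_near_coveringP [set: Y]).1 cY X (nbhs x)
  (fun x' y => `|E (x', y) - E (x, y)| < e) _.
by move=> /(_ _ near_pair); apply: filterS => x' Hx' y; exact: Hx'.
Qed.

Lemma continuous_borel_measurable (R : realType) (T : topologicalType)
    (x0 : T) (f : T -> R) :
  continuous f -> measurable_fun [set: borel x0] f.
Proof.
move=> cf; apply: (measurability (@RGenOInfty.G R)).
  exact: RGenOInfty.measurableE.
move=> _ [_ [a ->] <-]; rewrite setTI; apply: sub_sigma_algebra.
by apply: open_comp => // z _; exact: cf.
Qed.

Section parametric_integral.
Context (R : realType) (X Y : topologicalType) (y0 : Y).
Variable Q : probability (borel y0) R.
Variables (E : X * Y -> R) (M : R).
Hypotheses (cE : continuous E) (cY : compact [set: Y])
  (EM : forall z, `|E z| <= M)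
  (mE : forall x, measurable_fun [set: borel y0] (fun y => E (x, y))).

Let norm_diff_le (x x' : X) y : `|E (x, y) - E (x', y)| <= M + M.
Proof. by apply: le_trans (ler_normB _ _) _; exact: lerD. Qed.

Lemma continuous_Rintegral_section : continuous (fun x => \int[Q]_y E (x, y)).
Proof.
move=> x; apply/cvgrPdist_le => e e0.
have int_sec x' : Q.-integrable [set: borel y0] (EFin \o (fun y => E (x', y))).
  exact: bounded_integrable (mE x') (fun y => EM _).
near=> x'.
have Ux : forall y, `|E (x', y) - E (x, y)| < e.
  by near: x'; exact: near_section_dist_lt.
have mdiff : measurable_fun [set: borel y0] (fun y => E (x, y) - E (x', y)).
  exact: measurable_funB.
rewrite -RintegralB//; apply: le_trans (le_normr_Rintegral measurableT
  (bounded_integrable Q mdiff (norm_diff_le x x'))) _.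
rewrite -[leRHS](Rintegral_probability_cst Q); apply: le_Rintegral => //.
- apply: bounded_integrable (measurableT_comp _ mdiff) _ => // y.
  by rewrite normr_id; exact: norm_diff_le.
- by apply: (bounded_integrable Q (K := e)) => // y; rewrite ger0_norm// ltW.
- by move=> y _; rewrite distrC ltW.
Unshelve. all: end_near.
Qed.
End parametric_integral.

Section jacobian_change.
Variables (R : realType) (X Y : topologicalType) (x0 : X) (y0 : Y).
Hypotheses (cX : compact [set: X]) (cY : compact [set: Y]).
Variables (pi0 : probability (borel x0 * borel y0)%type R)
  (nu : probability (borel x0) R) (phi : X * Y -> R).
Hypotheses (cphi : continuous phi)
  (phi_jac : is_jacobian nu pi0 (fun z => expR (phi z))).

Local Notation TX := (borel x0).
Local Notation TY := (borel y0).
Local Notation Q := (ymarg pi0).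
Local Notation P0 := (xmarg pi0).

Let cXY : compact [set: (X * Y)%type].
Proof. by rewrite -setXTT; exact: compact_setX. Qed.

Let M : R := sval (cid (compact_continuous_bounded cXY cphi)).
Let norm_phi_le : forall z, `|phi z| <= M :=
  svalP (cid (compact_continuous_bounded cXY cphi)).

Let mexp_phi : measurable_fun [set: (TX * TY)%type] (fun z => expR (phi z)).
Proof. by case: phi_jac. Qed.

Let mphi : measurable_fun [set: (TX * TY)%type] phi.
Proof.
rewrite (_ : phi = (fun z => ln (expR (phi z)))); last first.
  by apply/funext => z; rewrite expRK.
exact: measurableT_comp.
Qed.

Let norm_expR_phi_le z : `|expR (phi z)| <= expR M.
Proof.
rewrite ger0_norm ?expR_ge0// ler_expR.
by have := norm_phi_le z; rewrite ler_norml => /andP[].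
Qed.

Let msection (x : TX) :
  measurable_fun [set: TY] (fun y => expR (phi (x, y))).
Proof. exact: (measurable_fun_pair2 x mexp_phi). Qed.

Definition xdensity (x : X) : R := \int[Q]_y expR (phi (x, y)).

Lemma xdensityE (x : TX) :
  (xdensity x)%:E = (\int[Q]_y (expR (phi (x, y)))%:E)%E.
Proof.
rewrite fineK//; apply: (integrable_fin_num measurableT).
exact: (bounded_integrable Q (msection x) (fun y => norm_expR_phi_le (x, y))).
Qed.

Lemma xdensity_gt0 x : 0 < xdensity x.
Proof.
apply: lt_le_trans (expR_gt0 (- M)) _.
rewrite -(Rintegral_probability_cst Q (expR (- M))).
apply: le_Rintegral => //.
- apply: (bounded_integrable Q (K := expR (- M))) => // y.
  by rewrite ger0_norm ?expR_ge0.
- exact: (bounded_integrable Q (msection x) (fun y => norm_expR_phi_le (x, y))).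
- move=> y _; rewrite ler_expR.
  by have := norm_phi_le (x, y); rewrite ler_norml => /andP[].
Qed.

Lemma continuous_xdensity : continuous xdensity.
Proof.
have cexp_phi : continuous (fun z => expR (phi z)).
  by move=> z; apply: continuous_comp; [exact: cphi|exact: continuous_expR].
exact: (continuous_Rintegral_section cexp_phi cY norm_expR_phi_le msection).
Qed.

Let mxdensity : measurable_fun [set: TX] xdensity.
Proof. exact: continuous_borel_measurable continuous_xdensity. Qed.

Lemma xmarg_density (A : set TX) : measurable A ->
  P0 A = (\int[nu]_(x in A) (xdensity x)%:E)%E.
Proof.
move=> mA; pose g (z : (TX * TY)%type) : R := \1_(fst @^-1` A) z.
have mA' : measurable (fst @^-1` A : set (TX * TY)).
  by rewrite -[X in measurable X]setTI; exact: measurable_fst.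
have mg : measurable_fun [set: (TX * TY)%type] g by exact: measurable_indic.
have gexp_ge0 z : (0 <= (g z * expR (phi z))%:E)%E.
  by rewrite lee_fin mulr_ge0 ?expR_ge0// /g indicE.
have mgexp : measurable_fun [set: (TX * TY)%type]
    (fun z => (g z * expR (phi z))%:E).
  exact/measurable_EFinP/measurable_funM.
have -> : P0 A = (\int[pi0]_z (g z)%:E)%E by rewrite integral_indic// setIT.
(* The Jacobian identity for the indicator of A * Y, then Tonelli. *)
case: phi_jac => _ _ _ <- //; last first.
  exists 1; split; first exact: num_real.
  move=> K K1 z _; apply: le_trans (ltW K1).
  by rewrite /g indicE; case: (_ \in _); rewrite ?normr1 ?normr0.
rewrite -(fubini_tonelli _ mgexp gexp_ge0) [RHS]integral_mkcond.
apply: eq_integral => x _; rewrite patchE.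
have gx y : g (x, y) = \1_A x by [].
under eq_integral do rewrite gx EFinM.
rewrite ge0_integralZl//; last exact/measurable_EFinP.
by rewrite -xdensityE /g indicE; case: (x \in A); rewrite ?mul1e ?mul0e.
Qed.

Lemma integral_xmarg (f : TX -> \bar R) : measurable_fun [set: TX] f ->
  (\int[P0]_x f x = \int[nu]_x (f x * (xdensity x)%:E))%E.
Proof.
have xdensity_ge0 (x : TX) : 0 <= xdensity x by exact/ltW/xdensity_gt0.
exact: integral_density xdensity_ge0 mxdensity xmarg_density f.
Qed.

Definition psi0 (z : X * Y) : R := phi z - ln (xdensity z.1).

Let cln_xdensity : continuous (fun x => ln (xdensity x)).
Proof.
move=> x; apply: continuous_comp; first exact: continuous_xdensity.
exact/continuous_ln/xdensity_gt0.
Qed.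

Let Mln : R := sval (cid (compact_continuous_bounded cX cln_xdensity)).
Let norm_ln_xdensity_le (z : (TX * TY)%type) : `|ln (xdensity z.1)| <= Mln :=
  svalP (cid (compact_continuous_bounded cX cln_xdensity)) z.1.

Let mln_xdensity : measurable_fun [set: (TX * TY)%type]
  (fun z => ln (xdensity z.1)).
Proof.
have mln : measurable_fun [set: TX] (fun x => ln (xdensity x)).
  exact: continuous_borel_measurable cln_xdensity.
exact: measurableT_comp mln measurable_fst.
Qed.

Lemma continuous_psi0 : continuous psi0.
Proof.
move=> z; apply: cvgB; first exact: cphi.
apply: continuous_comp; last exact: continuous_ln (xdensity_gt0 _).
apply: continuous_comp; last exact: continuous_xdensity.
exact: cvg_fst.
Qed.

Let mpsi0 : measurable_fun [set: (TX * TY)%type] psi0.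
Proof. exact: measurable_funB. Qed.

Lemma expR_psi0 z : expR (psi0 z) * xdensity z.1 = expR (phi z).
Proof.
by rewrite /psi0 expRB lnK ?posrE ?xdensity_gt0// divfK// gt_eqF// xdensity_gt0.
Qed.

Let mexpR_psi0_section (y : TY) :
  measurable_fun [set: TX] (fun x => expR (psi0 (x, y))).
Proof.
apply: measurableT_comp; first exact: measurable_expR.
exact: measurable_fun_pair1 y mpsi0.
Qed.

Lemma psi0_jacobian : is_jacobian P0 pi0 (fun z => expR (psi0 z)).
Proof.
have [_ _ phi1 phi_int] := phi_jac.
split=> [|z|y|g mg bg]; first exact: measurableT_comp.
- exact: expR_ge0.
- rewrite integral_xmarg; last first.
    by apply/measurable_EFinP; exact: mexpR_psi0_section.
  rewrite -(phi1 y); apply: eq_integral => x _.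
  by rewrite -EFinM (expR_psi0 (x, y)).
- rewrite -(phi_int g mg bg); apply: eq_integral => y _.
  rewrite integral_xmarg; last first.
    apply/measurable_EFinP/measurable_funM; last exact: mexpR_psi0_section.
    exact: measurable_fun_pair1 y mg.
  apply: eq_integral => x _.
  by rewrite -EFinM -mulrA (expR_psi0 (x, y)).
Qed.

Let expR_ln_xdensity (c : X * Y -> R) (y : TY) :
  measurable_fun [set: (TX * TY)%type] c ->
  (\int[P0]_x (expR (c (x, y)))%:E =
   \int[nu]_x (expR (c (x, y) + ln (xdensity x)))%:E)%E.
Proof.
move=> mc; rewrite integral_xmarg; last first.
  apply/measurable_EFinP/measurableT_comp => //.
  exact: measurable_fun_pair1 y mc.
apply: eq_integral => x _.
by rewrite -EFinM expRD lnK// posrE xdensity_gt0.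
Qed.

Lemma Hrel_xmarg (pi : probability (TX * TY)%type R) :
  Hrel nu pi = (Hrel P0 pi - \int[pi]_z (ln (xdensity z.1))%:E)%E.
Proof.
have norm_Nln_xdensity_le (z : (TX * TY)%type) : `|- ln (xdensity z.1)| <= Mln.
  by rewrite normrN.
have := bounded_integrable pi mln_xdensity norm_ln_xdensity_le.
move=> /(integrable_fin_num measurableT) fL; rewrite -(fineK fL) /Hrel.
set S0 := [set (\int[pi]_z (c z)%:E)%E | c in [set c | Fset pi c /\
  forall y : TY, (\int[P0]_x (expR (c (x, y)))%:E = 1)%E]].
set S := [set (\int[pi]_z (c z)%:E)%E | c in [set c | Fset pi c /\
  forall y : TY, (\int[nu]_x (expR (c (x, y)))%:E = 1)%E]].
suff -> : S =
    [set (s + (fine (\int[pi]_z (ln (xdensity z.1))%:E))%:E)%E | s in S0].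
  by rewrite ereal_sup_addEFin oppeD// fin_num_adde_defl.
apply/seteqP; split.
- move=> _ [c [[mc wc] c1] <-].
  pose c0 z := c z - ln (xdensity z.1).
  have mc0 : measurable_fun [set: (TX * TY)%type] c0 by exact: measurable_funB.
  have wc0 : wdef_int pi c0.
    exact: wdef_int_shift mc (measurable_funN mln_xdensity)
      norm_Nln_xdensity_le wc.
  have c0K z : c0 z + ln (xdensity z.1) = c z by rewrite subrK.
  exists (\int[pi]_z (c0 z)%:E)%E.
    exists c0 => //; split=> // y; rewrite expR_ln_xdensity//.
    by under eq_integral do rewrite c0K.
  rewrite fineK// -(integralD_shift mc0 mln_xdensity norm_ln_xdensity_le wc0).
  by apply: eq_integral => z _; rewrite c0K.
- move=> _ [_ [c [[mc wc] c1] <-] <-].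
  exists (fun z => c z + ln (xdensity z.1)).
    split=> [|y]; first split.
    + exact: measurable_funD.
    + exact: wdef_int_shift mc mln_xdensity norm_ln_xdensity_le wc.
    + by rewrite -(c1 y) expR_ln_xdensity.
  rewrite fineK//.
  exact: integralD_shift mc mln_xdensity norm_ln_xdensity_le wc.
Qed.

Lemma IG_xmarg (pi : probability (TX * TY)%type R) :
  (- (\int[pi]_z (psi0 z)%:E) - Hrel P0 pi
    = - (\int[pi]_z (phi z)%:E) - Hrel nu pi)%E.
Proof.
have iL := bounded_integrable pi mln_xdensity norm_ln_xdensity_le.
have iP := bounded_integrable pi mphi norm_phi_le.
rewrite Hrel_xmarg /psi0 integralB_EFin//.
rewrite -(fineK (integrable_fin_num measurableT iL)).
rewrite -(fineK (integrable_fin_num measurableT iP)).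
by case: (Hrel P0 pi) => [r| |] //=; congr EFin; ring.
Qed.
End jacobian_change.

Theorem mainTheorem10 (R : realType) (X Y : metricType R) (x0 : X) (y0 : Y)
  (cX : compact [set: X]) (cY : compact [set: Y])
  (pi0 : probability (borel x0 * borel y0)%type R)
  (hpos : forall U : set (X * Y), open U -> U !=set0 -> (0 < pi0 U)%E)
  (nu : probability (borel x0) R)
  (hnu : msupport (nu : set X -> \bar R) = [set: X])
  (phi : X * Y -> R) (hphi : continuous phi)
  (hJ : is_jacobian nu pi0 (fun z => expR (phi z))) :
  exists psi0 : X * Y -> R,
    [/\ continuous psi0,
        is_jacobian (xmarg pi0) pi0 (fun z => expR (psi0 z)) &
        forall pi : probability (borel x0 * borel y0)%type R,
          (- (\int[pi]_z (psi0 z)%:E) - Hrel (xmarg pi0) pi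
            = - (\int[pi]_z (phi z)%:E) - Hrel nu pi)%E].
Proof.
exists (psi0 pi0 phi); split.
- exact (continuous_psi0 cX cY hphi hJ).
- exact (psi0_jacobian cX cY hphi hJ).
- exact (IG_xmarg cX cY hphi hJ).
Qed.
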